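(* Let $(M,g_{\alpha\beta})$ be a conformal completion à la Penrose of a physical space-time with arbitrary $\Lambda$, in the gauge of the context. Choose $p_0\in\mathscr{J}^+$ and a future null vector $\ell^\alpha$ at $p_0$, and let $\gamma$ be the corresponding null geodesic with affine parameter $\lambda$, $\lambda|_{p_0}=0$, normalised by $\ell^\mu N_\mu|_{p_0}=-1$. Assume $\Omega(\lambda)$ admits an expansion in powers of $\lambda$ near $0$, and write $\Omega_i:=\frac{d^i\Omega}{d\lambda^i}(0)$; note $\Omega(0)=0$ and $\Omega_1=-1$. Then, near $\lambda=0$, the physical Weyl tensor along $\gamma$ satisfies at $p_0$ $$(L^*\hat C)_{\alpha\beta\gamma\delta}=\lambda\, d^{(N)}_{\alpha\beta\gamma\delta}+\lambda^2 e^{(III)}_{\alpha\beta\gamma\delta}+\lambda^3 f^{(II/D)}_{\alpha\beta\gamma\delta}+\lambda^4 g^{(I)}_{\alpha\beta\gamma\delta}+\lambda^5 h^{(I)}_{\alpha\beta\gamma\delta}+O(\lambda^6),$$ where (suppressing indices): $$d^{(N)}=-C^{(4,0)},$$ $$e^{(III)}=C^{(3,0)}+\tfrac{\Omega_2}{2}C^{(4,0)}-C^{(4,1)},$$ $$f^{(II/D)}=-C^{(2,0)}-\Omega_2C^{(3,0)}+\tfrac{\Omega_3}{6}C^{(4,0)}+C^{(3,1)}-C^{(4,2)}+\tfrac{\Omega_2}{2}C^{(4,1)},$$ $$g^{(I)}=C^{(1,0)}+\tfrac{3\Omega_2}{2}C^{(2,0)}+\Big(\tfrac{\Omega_2^2}{4}-\tfrac{\Omega_3}{3}\Big)C^{(3,0)}+\tfrac{\Omega_4}{4!}C^{(4,0)}-C^{(2,1)}+C^{(3,2)}-C^{(4,3)}+\tfrac{\Omega_2}{2}C^{(4,2)}-\Omega_2C^{(3,1)}+\tfrac{\Omega_3}{6}C^{(4,1)},$$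 $$h^{(I)}=-C^{(0,0)}-2\Omega_2C^{(1,0)}+\Big(\tfrac{\Omega_3}{2}-\tfrac34\Omega_2^2\Big)C^{(2,0)}+\Big(\tfrac16\Omega_2\Omega_3-\tfrac{\Omega_4}{12}\Big)C^{(3,0)}+\tfrac{\Omega_5}{5!}C^{(4,0)}+C^{(1,1)}-C^{(2,2)}+C^{(3,3)}-C^{(4,4)}+\tfrac32\Omega_2C^{(2,1)}-\Omega_2C^{(3,2)}+\tfrac{\Omega_2}{2}C^{(4,3)}+\tfrac{\Omega_2^2}{4}C^{(3,1)}-\tfrac{\Omega_3}{3}C^{(3,1)}+\tfrac{\Omega_3}{6}C^{(4,2)}+\tfrac{\Omega_4}{4!}C^{(4,1)}.$$ These five tensors are Weyl-tensor candidates. In the null tetrad containing $\ell^\alpha$ and $k^\alpha$, $d^{(N)}$ has only $\psi_4$ possibly non-zero (type N or zero, with $\ell$ a fourfold principal null direction). Their generic Petrov types are N, III, II/D, I, I respectively.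
   Context: A conformal completion à la Penrose of a physical space-time $(\hat M,\hat g_{\alpha\beta})$ is a space-time-with-boundary $(M,g_{\alpha\beta})$ satisfying the following. $\hat M\subset M$ is the interior. There is a smooth function $\Omega$ on $M$ with $\Omega>0$ and $g_{\alpha\beta}=\Omega^2\hat g_{\alpha\beta}$ on $\hat M$. The conformal boundary is $\mathscr{J}=\{\Omega=0\}$, and $d\Omega\neq0$ on $\mathscr{J}$; $\mathscr{J}^+$ denotes its future component. The physical metric satisfies Einstein's equations with cosmological constant $\Lambda$. The signature is $(-,+,+,+)$. $\nabla$ and $\hat\nabla$ denote the Levi-Civita connections of $g$ and $\hat g$. Set $N_\alpha:=\nabla_\alpha\Omega$; indices are raised and lowered with $g$. The gauge is fixed so that $\nabla_\alpha N_\beta=0$ on $\mathscr{J}$, hence $N_\alpha N^\alpha=-\Lambda/3$ on $\mathscr{J}$. The physical Weyl tensor satisfies $\hat C_{\alpha\beta\gamma}{}^\delta=C_{\alpha\beta\gamma}{}^\delta$ on $\hat M$. The rescaled Weyl tensor $d$ is defined by $\Omega d_{\alpha\beta\gamma}{}^\delta=C_{\alpha\beta\gamma}{}^\delta$ and is assumed to extend smoothly to $\mathscr{J}$. A Weyl-tensor candidate is a tensor with all algebraic symmetries of a Weyl tensor (pair antisymmetry, pair-exchange symmetry, cyclic identity, tracelessness). The geodesic $\gamma:[-1,0]\to M$ is the null $g$-geodesic with: - $\gamma(0)=p_0$ and $\gamma([-1,0))\subset\hat M$; - tangent $\ell^\alpha$ and affine parameter $\lambda$. Write $\Omega(\lambda)=\Omega(\gamma(\lambda))$.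 At $p_0$ set: - $k^\alpha:=N^\alpha-\frac{\Lambda}{6}\ell^\alpha$, which is null with $k\cdot\ell=-1$; - $P^\alpha{}_\beta:=\delta^\alpha_\beta+k^\alpha\ell_\beta+\ell^\alpha k_\beta$. Use the null tetrad $(\ell,k,m,\bar m)$ with Newman–Penrose Weyl scalars labelled so that only $\psi_4\neq0$ means $\ell$ is a fourfold principal null direction, and only $\psi_0\neq0$ means $k$ is. Let $t$ and $\hat t$ be the $\nabla$- and $\hat\nabla$-parallel propagators of covectors along $\gamma$ ($t(\lambda_i,\lambda_j)$ maps from $\gamma(\lambda_j)$ to $\gamma(\lambda_i)$). Define $$L_\alpha{}^\beta:=t_\alpha{}^\mu(0,-1)\hat t_\mu{}^\rho(-1,\lambda)t_\rho{}^\beta(\lambda,0)$$ and, for a covariant tensor $T$ at $\gamma(\lambda)$, $$(L^*T)_{\alpha_1\dots\alpha_r}:=L_{\alpha_1}{}^{\nu_1}\cdots L_{\alpha_r}{}^{\nu_r}t_{\nu_1}{}^{\mu_1}(0,\lambda)\cdots t_{\nu_r}{}^{\mu_r}(0,\lambda)T_{\mu_1\dots\mu_r}.$$ The tensors $C^{(a)}$ ($a=0,\dots,4$) are the Weyl-tensor candidates at $p_0$ in the decomposition $$L^*\hat C=\sum_{a=0}^4\Omega^{5-a}C^{(a)}.$$ They are regular as $\lambda\to0$, and each $C^{(a)}$ has only the Weyl scalar $\psi_a$ possibly non-vanishing in the tetrad $(\ell,k,m,\bar m)$. Their leading term is $C^{(4,0)}_{\alpha\beta\gamma\delta}=\frac{4}{\Omega(-1)^2}d_{\mu\nu\rho\sigma}k^\nu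 k^\sigma P_{[\alpha}{}^\mu\ell_{\beta]}P_{[\gamma}{}^\rho\ell_{\delta]}$. Their expansions are $C^{(a)}=\sum_{i\ge0}C^{(a,i)}\lambda^i$. *)

From mathcomp Require Import all_boot all_algebra.
From mathcomp Require Import all_classical all_reals all_analysis.
From mathcomp Require Import complex.
Set Implicit Arguments. Unset Strict Implicit. Unset Printing Implicit Defensive.
Import GRing.Theory Num.Theory.
Import numFieldNormedType.Exports.
Local Open Scope classical_set_scope.
Local Open Scope ring_scope.

(* Tensors / vectors at p0, in components w.r.t. a fixed basis of T_{p0}M. *)
Definition vec (R : Type) := 'I_4 -> R.
(* covariant 4-tensor T_{abcd} *)
Definition tensor4 (R : Type) := 'I_4 -> 'I_4 -> 'I_4 -> 'I_4 -> R.

Section Defs.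
Variable R : realType.

Definition gdot (g : 'M[R]_4) (u v : vec R) : R :=
  \sum_(a < 4) \sum_(b < 4) g a b * u a * v b.

Definition cR (x : R) : R[i] := Complex x 0.
Definition cvec (u : vec R) : vec R[i] := fun a => cR (u a).
Definition cbar (u : vec R[i]) : vec R[i] := fun a => conjc (u a).

Definition cgdot (g : 'M[R]_4) (u v : vec R[i]) : R[i] :=
  \sum_(a < 4) \sum_(b < 4) cR (g a b) * u a * v b.

Definition cten (T : tensor4 R) (u v w x : vec R[i]) : R[i] :=
  \sum_(a < 4) \sum_(b < 4) \sum_(c < 4) \sum_(d < 4)
     cR (T a b c d) * u a * v b * w c * x d.

Definition null_tetrad (g : 'M[R]_4) (l k : vec R) (m : vec R[i]) : Prop :=
  [/\ gdot g l l = 0, gdot g k k = 0 & gdot g l k = -1] /\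
  [/\ cgdot g (cvec l) m = 0, cgdot g (cvec k) m = 0,
      cgdot g m m = 0 & cgdot g m (cbar m) = 1].

(* Newman-Penrose Weyl scalars of T in the tetrad (l,k,m,mbar), labelled so that
   "only psi_4 <> 0" means l is a fourfold principal null direction and
   "only psi_0 <> 0" means k is. *)
Definition psi (T : tensor4 R) (l k : vec R) (m : vec R[i]) (n : nat) : R[i] :=
  let L := cvec l in let K := cvec k in let Mb := cbar m in
  match n with
  | 0 => cten T L m L m
  | 1 => cten T L K L m
  | 2 => cten T L m Mb K
  | 3 => cten T L K Mb K
  | _ => cten T K Mb K Mb
  end.

Definition only_psi (a : nat) (T : tensor4 R) (l k : vec R) (m : vec R[i]) : Prop :=
  forall b : nat, (b < 5)%N -> b != a -> psi T l k m b = 0.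

Definition weyl_candidate (g : 'M[R]_4) (T : tensor4 R) : Prop :=
  [/\ (forall a b c d, T b a c d = - T a b c d),
      (forall a b c d, T a b d c = - T a b c d),
      (forall a b c d, T c d a b = T a b c d),
      (forall a b c d, T a b c d + T a c d b + T a d b c = 0) &
      (forall b d, \sum_(a < 4) \sum_(c < 4) invmx g a c * T a b c d = 0)].

Definition pseries_near (f : R -> R) (c : nat -> R) : Prop :=
  exists r : R, 0 < r /\
    forall x : R, - r < x <= 0 ->
      (fun n : nat => \sum_(i < n) c i * x ^+ i) @ \oo --> f x.

(* Omega_i := i-th derivative at 0 = i! * (i-th power-series coefficient) *)
Definition Om (c : nat -> R) (i : nat) : R := (i`!)%:R * c i.

End Defs.

(* Along the geodesic, [L^* hatC = sum_a Omega^(5-a) C^(a)] with [Omega = - lambda + O(lambda^2)]: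
   expanding [Omega] and every component of every [C^(a)] in its power series and collecting
   powers of [lambda] (Cauchy products of truncated one-sided expansions) gives the five
   coefficients, and the remainder is [O(lambda^6)].  Being a Weyl-tensor candidate and having
   a prescribed NP scalar vanish are linear conditions on a tensor; they pass from [C^(a)(lambda)]
   to each Taylor coefficient [C^(a,i)] because one-sided expansions at [0] are unique, and from
   there to the linear combinations [d^(N)], ..., [h^(I)]. *)

From mathcomp Require Import all_boot all_algebra.
From mathcomp Require Import all_classical all_reals all_analysis.
From mathcomp Require Import complex ring lra.
Import order.Order.TTheory GRing.Theory Num.Theory.
Import numFieldNormedType.Exports.
Set Implicit Arguments. Unset Strict Implicit. Unset Printing Implicit Defensive.
Local Open Scope classical_set_scope.
Local Open Scope ring_scope.

Section LeftJets.
Variable R : realType.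
Implicit Types (f g h : R -> R) (a b : nat -> R) (n : nat).

Lemma near_at_left0P (P : R -> Prop) :
  (\forall x \near 0^'-, P x) <-> exists2 e : R, 0 < e & forall x, - e < x < 0 -> P x.
Proof.
split.
- move=> /nbhs_ballP[e e0 He]; exists e => // x /andP[xl xr]; apply: He => //.
  by rewrite /ball /= sub0r normrN ltr0_norm // ltrNl.
- move=> [e e0 He]; near=> x; apply: He; apply/andP; split.
    by near: x; apply: nbhs_left_gt; rewrite ltrNl oppr0.
  by near: x; exact: nbhs_left_lt.
Unshelve. all: by end_near.
Qed.

Lemma near_at_left0_norm_le1 : \forall x \near (0 : R)^'-, `|x| <= 1.
Proof.
near=> x; have x0 : x < 0 by near: x; exact: nbhs_left_lt.
rewrite ltr0_norm // lerNl; apply: ltW; near: x; apply: nbhs_left_gt.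
by rewrite ltrNl oppr0.
Unshelve. all: by end_near.
Qed.

Definition bigO_left n h :=
  exists K : R, \forall x \near 0^'-, `|h x| <= K * `|x| ^+ n.

Lemma bigO_left_eq_near n h h' :
  (\forall x \near 0^'-, h x = h' x) -> bigO_left n h -> bigO_left n h'.
Proof.
by move=> E [K HK]; exists K; near=> x; rewrite -(near E x) // (near HK x).
Unshelve. all: by end_near.
Qed.

Lemma bigO_leftD n h h' :
  bigO_left n h -> bigO_left n h' -> bigO_left n (fun x => h x + h' x).
Proof.
move=> [K HK] [K' HK']; exists (K + K'); near=> x.
rewrite mulrDl (le_trans (ler_normD _ _)) // lerD //; [exact: (near HK) | exact: (near HK')].
Unshelve. all: by end_near.
Qed.

Lemma bigO_leftM m n h h' :
  bigO_left m h -> bigO_left n h' -> bigO_left (m + n) (fun x => h x * h' x).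
Proof.
move=> [K HK] [K' HK']; exists (K * K'); near=> x.
rewrite normrM exprD mulrACA ler_pM //; [exact: (near HK) | exact: (near HK')].
Unshelve. all: by end_near.
Qed.

Lemma bigO_left_cst (s : R) : bigO_left 0 (fun _ => s).
Proof. by exists `|s|; near=> x; rewrite expr0 mulr1. Unshelve. all: by end_near. Qed.

Lemma bigO_left_exp n : bigO_left n (fun x => x ^+ n).
Proof. by exists 1; near=> x; rewrite mul1r normrX. Unshelve. all: by end_near. Qed.

Lemma bigO_leftZ n (s : R) h : bigO_left n h -> bigO_left n (fun x => s * h x).
Proof. exact: (bigO_leftM (bigO_left_cst s)). Qed.

Lemma bigO_left_le m n h : (m <= n)%N -> bigO_left n h -> bigO_left m h.
Proof.
move=> /subnK <- [K HK]; exists `|K|; near=> x.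
have x1 : `|x| <= 1 by near: x; exact: near_at_left0_norm_le1.
apply: (le_trans (near HK x _)) => //; rewrite exprD mulrA ler_wpM2r ?exprn_ge0 //.
apply: (le_trans (ler_norm _)); rewrite normrM normrX normr_id.
by rewrite ler_piMr ?exprn_ile1.
Unshelve. all: by end_near.
Qed.

Lemma bigO_left0 n : bigO_left n (fun _ => 0).
Proof.
by exists 0; near=> x; rewrite normr0 mul0r.
Unshelve. all: by end_near.
Qed.

Lemma bigO_left_sum (I : Type) (s : seq I) (P : pred I) (H : I -> R -> R) n :
  (forall j, P j -> bigO_left n (H j)) ->
  bigO_left n (fun x => \sum_(j <- s | P j) H j x).
Proof.
move=> HO; elim: s => [|j s IH].
  by apply: bigO_left_eq_near (bigO_left0 n); near=> x; rewrite big_nil.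
case Pj: (P j).
  apply: bigO_left_eq_near (bigO_leftD (HO j Pj) IH).
  by near=> x; rewrite big_cons Pj.
by apply: bigO_left_eq_near IH; near=> x; rewrite big_cons Pj.
Unshelve. all: by end_near.
Qed.

Lemma bigO_left_uniform (I : finType) (H : I -> R -> R) n :
  (forall t, bigO_left n (H t)) ->
  exists K : R, \forall x \near 0^'-, forall t, `|H t x| <= K * `|x| ^+ n.
Proof.
move=> HO; have [K HK] : bigO_left n (fun x => \sum_t `|H t x|).
  apply: bigO_left_sum => t _; have [K HK] := HO t.
  by exists K; near=> x; rewrite normr_id (near HK x).
exists K; near=> x => t; apply: le_trans (near HK x _) => //.
rewrite [X in _ <= X]ger0_norm ?sumr_ge0 // (bigD1 t) //= lerDl sumr_ge0.
Unshelve. all: by end_near.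
Qed.

Lemma bigO_left_horner (p : {poly R}) : bigO_left 0 (fun x => p.[x]).
Proof.
exists (\sum_(i < size p) `|p`_i|); near=> x; rewrite expr0 mulr1 horner_coef.
have x1 : `|x| <= 1 by near: x; exact: near_at_left0_norm_le1.
apply: (le_trans (ler_norm_sum _ _ _)); apply: ler_sum => i _.
by rewrite normrM normrX ler_piMr ?exprn_ile1.
Unshelve. all: by end_near.
Qed.

Definition jet f a n := bigO_left n (fun x => f x - \sum_(i < n) a i * x ^+ i).

Lemma jet_eq_near f g a n :
  (\forall x \near 0^'-, f x = g x) -> jet f a n -> jet g a n.
Proof.
move=> E; apply: bigO_left_eq_near; near=> x; by rewrite (near E x).
Unshelve. all: by end_near.
Qed.

Lemma eq_jet_coef f a b n :
  (forall i, (i < n)%N -> a i = b i) -> jet f a n -> jet f b n.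
Proof.
move=> E; apply: bigO_left_eq_near; near=> x.
by congr (_ - _); apply: eq_bigr => i _; rewrite E.
Unshelve. all: by end_near.
Qed.

Lemma jetD f g a b n :
  jet f a n -> jet g b n -> jet (fun x => f x + g x) (fun i => a i + b i) n.
Proof.
move=> Jf Jg; apply: bigO_left_eq_near (bigO_leftD Jf Jg); near=> x.
have -> : \sum_(i < n) (a i + b i) * x ^+ i =
    \sum_(i < n) a i * x ^+ i + \sum_(i < n) b i * x ^+ i.
  by rewrite -big_split; apply: eq_bigr => i _; rewrite mulrDl.
ring.
Unshelve. all: by end_near.
Qed.

Lemma jetZ (s : R) f a n :
  jet f a n -> jet (fun x => s * f x) (fun i => s * a i) n.
Proof.
move=> Jf; apply: bigO_left_eq_near (bigO_leftZ s Jf); near=> x.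
by rewrite mulrBr mulr_sumr; congr (_ - _); apply: eq_bigr => i _; rewrite mulrA.
Unshelve. all: by end_near.
Qed.

Lemma jetB f g a b n :
  jet f a n -> jet g b n -> jet (fun x => f x - g x) (fun i => a i - b i) n.
Proof.
move=> Jf /(jetZ (-1)) Jg; apply: jet_eq_near (eq_jet_coef _ (jetD Jf Jg)).
  by near=> x; rewrite mulN1r.
by move=> i _; rewrite mulN1r.
Unshelve. all: by end_near.
Qed.

Lemma jet_sum (I : Type) (s : seq I) (P : pred I) (F : I -> R -> R)
    (A : I -> nat -> R) n :
  (forall j, P j -> jet (F j) (A j) n) ->
  jet (fun x => \sum_(j <- s | P j) F j x) (fun i => \sum_(j <- s | P j) A j i) n.
Proof.
move=> J; apply: bigO_left_eq_near (bigO_left_sum s J); near=> x.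
rewrite sumrB; congr (_ - _); rewrite exchange_big /=.
by apply: eq_bigr => i _; rewrite mulr_suml.
Unshelve. all: by end_near.
Qed.

Lemma jet_horner (p : {poly R}) n : jet (fun x => p.[x]) (fun i => p`_i) n.
Proof.
apply: bigO_left_eq_near (bigO_leftM (bigO_left_horner (drop_poly n p)) (bigO_left_exp n)).
near=> x; have := congr1 (fun q => q.[x]) (poly_take_drop n p).
by rewrite /= hornerD hornerM hornerXn /take_poly horner_poly => <-; ring.
Unshelve. all: by end_near.
Qed.

Definition cauchy_prod a b i := \sum_(j < i.+1) a j * b (i - j)%N.

Lemma cauchy_prod0 a b : cauchy_prod a b 0 = a 0%N * b 0%N.
Proof. by rewrite /cauchy_prod big_ord1. Qed.

Lemma cauchy_prodS a b i :
  cauchy_prod a b i.+1 = a 0%N * b i.+1 + cauchy_prod (fun j => a j.+1) b i.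
Proof. by rewrite /cauchy_prod big_ord_recl. Qed.

Lemma jetM f g a b n :
  jet f a n -> jet g b n -> jet (fun x => f x * g x) (cauchy_prod a b) n.
Proof.
move=> Jf Jg; set Pa := \poly_(i < n) a i; set Pb := \poly_(i < n) b i.
have sumPa x : \sum_(i < n) a i * x ^+ i = Pa.[x] by rewrite horner_poly.
have sumPb x : \sum_(i < n) b i * x ^+ i = Pb.[x] by rewrite horner_poly.
apply: (@eq_jet_coef _ (fun i => (Pa * Pb)`_i)).
  move=> i ltin; rewrite coefM; apply: eq_bigr => j _; rewrite !coef_poly.
  have ltjn : (j < n)%N := leq_ltn_trans (leq_ord j) ltin.
  by rewrite ltjn (leq_ltn_trans (leq_subr j i) ltin).
have bdg : bigO_left 0 g.
  apply: bigO_left_eq_near (bigO_leftD (bigO_left_le (leq0n n) Jg) (bigO_left_horner Pb)).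
  by near=> x; rewrite sumPb subrK.
have := bigO_leftM Jf bdg; have := bigO_leftM (bigO_left_horner Pa) Jg.
rewrite addn0 add0n => OPa Og.
apply: bigO_left_eq_near (bigO_leftD (bigO_leftD Og OPa) (jet_horner (Pa * Pb) n)).
by near=> x; rewrite sumPa sumPb hornerM; ring.
Unshelve. all: by end_near.
Qed.

Lemma jet_weaken f a n : jet f a n.+1 -> jet f a n.
Proof.
move=> /(bigO_left_le (leqnSn n)) J.
apply: bigO_left_eq_near (bigO_leftD J (bigO_leftZ (a n) (bigO_left_exp n))).
by near=> x; rewrite big_ord_recr /=; ring.
Unshelve. all: by end_near.
Qed.

Lemma jet0_coef a n : jet (fun _ => 0) a n -> forall i, (i < n)%N -> a i = 0.
Proof.
elim: n => // n IH J i; have low := IH (jet_weaken J).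
rewrite ltnS leq_eqVlt => /orP[/eqP ->|]; last exact: low.
(* With the lower coefficients zero, the bound reads [|a_n| |x|^n <= K |x|^n.+1]. *)
have [K HK] := J; apply/normr0_eq0/le_anti; rewrite normr_ge0 andbT.
have Kx0 : K * `|x| @[x --> (0 : R)^'-] --> K * `|0 : R|.
  apply: cvg_at_left_filter; apply: cvgMr; apply: (@cvg_norm _ R^o); exact: cvg_id.
rewrite normr0 mulr0 in Kx0.
apply: (cvgr_to_ge Kx0); near=> x.
have x0 : x < 0 by near: x; exact: nbhs_left_lt.
have xn0 : 0 < `|x| ^+ n by rewrite exprn_gt0 // normr_gt0 lt_eqF.
rewrite -(ler_pM2r xn0) -mulrA -exprS.
have := near HK x; rewrite big_ord_recr /= big1 => [|j _]; last by rewrite low ?mul0r.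
by rewrite sub0r add0r normrN normrM normrX; apply.
Unshelve. all: by end_near.
Qed.

Lemma jet_unique0 f a :
  (forall n, jet f a n) -> (\forall x \near 0^'-, f x = 0) -> forall i, a i = 0.
Proof.
move=> J E i; apply: (jet0_coef (n := i.+1)) => //.
by apply: jet_eq_near (J i.+1); near=> x; rewrite (near E x).
Unshelve. all: by end_near.
Qed.

End LeftJets.

Section PowerSeriesJets.
Variable R : realType.

Lemma pseries_tail_le (c : nat -> R) (y B x : R) n m :
  0 < y -> (forall i, `|c i| * y ^+ i <= B) -> x != 0 -> `|x| <= y / 2 ->
  (n <= m)%N ->
  `|\sum_(i < m) c i * x ^+ i - \sum_(i < n) c i * x ^+ i| <= 2 * B * (`|x| / y) ^+ n.
Proof.
move=> y0 HB x0 xy nm; set q := `|x| / y.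
have q0 : 0 < q by rewrite divr_gt0 // normr_gt0.
have q1 : q <= 1 / 2 by rewrite /q ler_pdivrMr //; lra.
have B0 : 0 <= B by apply: le_trans (HB 0%N); rewrite mulr_ge0.
rewrite -!(big_mkord xpredT (fun i => c i * x ^+ i)) (big_cat_nat (leq0n n) nm) /=.
rewrite addrAC subrr add0r; apply: le_trans (ler_norm_sum _ _ _) _.
have term i : `|c i * x ^+ i| <= B * q ^+ i.
  rewrite normrM normrX -[`|x|](divfK (lt0r_neq0 y0)) -/q exprMn mulrCA mulrA.
  by rewrite [B * _]mulrC -mulrA ler_wpM2l ?exprn_ge0 ?(ltW q0).
apply: le_trans (ler_sum _ (fun i _ => term i)) _.
rewrite -mulr_sumr -(subnKC nm) geometric_partial_tail [2 * B]mulrC -mulrA ler_wpM2l //.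
apply: le_trans (geometric_le_lim _ (exprn_ge0 _ (ltW q0)) q0 _) _.
  by rewrite gtr0_norm //; lra.
rewrite [2 * _]mulrC ler_wpM2l ?exprn_ge0 ?(ltW q0) // -div1r ler_pdivrMr; lra.
Qed.

Lemma pseries_near_jet (f : R -> R) (c : nat -> R) n : pseries_near f c -> jet f c n.
Proof.
move=> [r [r0 Hr]]; set y := r / 2; have y0 : 0 < y by rewrite divr_gt0.
have [B HB] : exists B, forall i, `|c i| * y ^+ i <= B.
  have : cvgn (series (fun i => c i * (- y) ^+ i)).
    apply/cvg_ex; exists (f (- y)); rewrite seriesEord; apply: Hr.
    by apply/andP; split; rewrite /y; lra.
  move=> /cvg_series_bounded[M [_ HM]]; exists (`|M| + 1) => i.
  have /HM/(_ i I) : M < `|M| + 1 by rewrite (le_lt_trans (ler_norm M)) ?ltrDl.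
  by rewrite /= normrM normrX normrN (gtr0_norm y0).
exists (2 * B / y ^+ n); near=> x.
have x0 : x < 0 by near: x; exact: nbhs_left_lt.
have xy : - (y / 2) < x by near: x; apply: nbhs_left_gt; rewrite oppr_lt0 divr_gt0.
have /Hr cvx : - r < x <= 0 by apply/andP; split; rewrite /y in xy; lra.
have cv : `|\sum_(i < m) c i * x ^+ i - \sum_(i < n) c i * x ^+ i| @[m --> \oo] -->
    `|f x - \sum_(i < n) c i * x ^+ i|.
  by apply: cvg_norm; apply: cvgB => //; exact: cvg_cst.
have : `|f x - \sum_(i < n) c i * x ^+ i| <= 2 * B * (`|x| / y) ^+ n.
  apply: (cvgr_to_le cv); near=> m; apply: pseries_tail_le; rewrite ?lt_eqF //.
    by rewrite ltr0_norm //; lra.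
  by near: m; exact: nbhs_infty_ge.
by rewrite expr_div_n mulrA mulrAC.
Unshelve. all: by end_near.
Qed.

End PowerSeriesJets.

Section TensorCoefficients.
Variable R : realType.
Variables (F : R -> tensor4 R) (C : nat -> tensor4 R).
Hypothesis FC : forall a b c d n, jet (fun x => F x a b c d) (fun i => C i a b c d) n.

Lemma weyl_candidate_coef (g : 'M[R]_4) :
  (\forall x \near 0^'-, weyl_candidate g (F x)) -> forall i, weyl_candidate g (C i).
Proof.
move=> W i; split.
- move=> a b c d; apply/eqP; rewrite -addr_eq0; apply/eqP; move: i.
  apply: (@jet_unique0 _ (fun x => F x b a c d + F x a b c d)); first by move=> n; exact: jetD.
  near=> x; have [W1 _ _ _ _] : weyl_candidate g (F x) by near: x.
  by rewrite W1 addNr.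
- move=> a b c d; apply/eqP; rewrite -addr_eq0; apply/eqP; move: i.
  apply: (@jet_unique0 _ (fun x => F x a b d c + F x a b c d)); first by move=> n; exact: jetD.
  near=> x; have [_ W1 _ _ _] : weyl_candidate g (F x) by near: x.
  by rewrite W1 addNr.
- move=> a b c d; apply/eqP; rewrite -subr_eq0; apply/eqP; move: i.
  apply: (@jet_unique0 _ (fun x => F x c d a b - F x a b c d)); first by move=> n; exact: jetB.
  near=> x; have [_ _ W1 _ _] : weyl_candidate g (F x) by near: x.
  by rewrite W1 subrr.
- move=> a b c d; move: i.
  apply: (@jet_unique0 _ (fun x => F x a b c d + F x a c d b + F x a d b c)).
    by move=> n; apply: jetD => //; exact: jetD.
  near=> x; have [_ _ _ W1 _] : weyl_candidate g (F x) by near: x.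
  exact: W1.
- move=> b d; move: i.
  apply: (@jet_unique0 _ (fun x => \sum_(a < 4) \sum_(c < 4) invmx g a c * F x a b c d)).
    by move=> n; apply: jet_sum => a _; apply: jet_sum => c _; exact: jetZ.
  near=> x; have [_ _ _ _ W1] : weyl_candidate g (F x) by near: x.
  exact: W1.
Unshelve. all: by end_near.
Qed.

Lemma cten_coef (u v w z : vec R[i]) :
  (\forall x \near 0^'-, cten (F x) u v w z = 0) -> forall i, cten (C i) u v w z = 0.
Proof.
move=> E i.
have proj0 (rho : R[i] -> R) : {morph rho : p q / p + q} -> rho 0 = 0 ->
    (forall t p, rho (cR t * p) = t * rho p) -> rho (cten (C i) u v w z) = 0.
  move=> rhoD rho0 rhoZ.
  have rho_cten T : rho (cten T u v w z) = \sum_(a < 4) \sum_(b < 4) \sum_(c < 4)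
      \sum_(d < 4) rho (u a * (v b * (w c * z d))) * T a b c d.
    rewrite /cten; do 4 (rewrite (big_morph rho rhoD rho0); apply: eq_bigr => ? _).
    by rewrite -!mulrA rhoZ mulrC.
  rewrite rho_cten; move: i; apply: (@jet_unique0 _ (fun x => rho (cten (F x) u v w z))).
    move=> n; under eq_fun do rewrite rho_cten.
    by do 4 (apply: jet_sum => ? _); exact: jetZ.
  by near=> x; rewrite (near E x).
have re0 : complex.Re (cten (C i) u v w z) = 0.
  by apply: proj0 => [[? ?] [? ?]|//|t [? ?] /=]; ring.
have im0 : complex.Im (cten (C i) u v w z) = 0.
  by apply: proj0 => [[? ?] [? ?]|//|t [? ?] /=]; ring.
by move: re0 im0; case: (cten _ _ _ _ _) => p q /= -> ->.
Unshelve. all: by end_near.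
Qed.

Lemma only_psi_coef j (l k : vec R) (m : vec R[i]) :
  (\forall x \near 0^'-, only_psi j (F x) l k m) -> forall i, only_psi j (C i) l k m.
Proof.
move=> E i b ltb5 neqbj.
have Eb : \forall x \near 0^'-, psi (F x) l k m b = 0.
  near=> x; have Ex : only_psi j (F x) l k m by near: x.
  exact: Ex.
by case: b ltb5 neqbj Eb => [|[|[|[|b]]]] _ _ Eb; exact: (cten_coef Eb).
Unshelve. all: by end_near.
Qed.

End TensorCoefficients.

Section LinearConditions.
Variable R : realType.
Implicit Types (P : tensor4 R -> Prop) (T U : tensor4 R).

Definition lin_closed P :=
  P (fun _ _ _ _ => 0) /\
  forall (s : R) T U, P T -> P U -> P (fun a b c d => s * T a b c d + U a b c d).

Lemma lin_closedZ P (s : R) T : lin_closed P -> P T -> P (fun a b c d => s * T a b c d).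
Proof.
move=> [P0 PL] PT; have := PL s _ _ PT P0.
by congr P; do 4 (apply: funext => ?); rewrite addr0.
Qed.

Lemma lin_closedD P T U : lin_closed P -> P T -> P U -> P (fun a b c d => T a b c d + U a b c d).
Proof.
move=> [_ PL] PT PU; have := PL 1 _ _ PT PU.
by congr P; do 4 (apply: funext => ?); rewrite mul1r.
Qed.

Lemma lin_closedN P T : lin_closed P -> P T -> P (fun a b c d => - T a b c d).
Proof.
move=> LP /(lin_closedZ (-1) LP).
by congr P; do 4 (apply: funext => ?); rewrite mulN1r.
Qed.

Lemma lin_closedB P T U : lin_closed P -> P T -> P U -> P (fun a b c d => T a b c d - U a b c d).
Proof. by move=> LP PT /(lin_closedN LP); apply: lin_closedD. Qed.

Lemma weyl_candidate_lin_closed (g : 'M[R]_4) : lin_closed (weyl_candidate g).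
Proof.
split.
  split=> *; rewrite ?oppr0 ?addr0 //.
  by rewrite big1 // => a _; rewrite big1 // => c _; rewrite mulr0.
move=> s T U [T1 T2 T3 T4 T5] [U1 U2 U3 U4 U5]; split=> [a b c d|a b c d|a b c d|a b c d|b d].
- by rewrite T1 U1; ring.
- by rewrite T2 U2; ring.
- by rewrite T3 U3.
- transitivity (s * (T a b c d + T a c d b + T a d b c) + (U a b c d + U a c d b + U a d b c)).
    by ring.
  by rewrite T4 U4 mulr0 addr0.
- transitivity (s * (\sum_(a < 4) \sum_(c < 4) invmx g a c * T a b c d) +
      \sum_(a < 4) \sum_(c < 4) invmx g a c * U a b c d).
    rewrite mulr_sumr -big_split; apply: eq_bigr => a _.
    by rewrite mulr_sumr -big_split; apply: eq_bigr => c _ /=; ring.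
  by rewrite T5 U5 mulr0 addr0.
Qed.

Lemma cten_lin (s : R) T U (u v w z : vec R[i]) :
  cten (fun a b c d => s * T a b c d + U a b c d) u v w z =
  cR s * cten T u v w z + cten U u v w z.
Proof.
have cRD x y : cR (x + y) = cR x + cR y by apply/eqP; rewrite eq_complex /= addr0 !eqxx.
have cRM x y : cR (x * y) = cR x * cR y.
  by apply/eqP; rewrite eq_complex /= !mulr0 !mul0r subr0 addr0 !eqxx.
rewrite /cten; do 4 (rewrite mulr_sumr -big_split; apply: eq_bigr => ? _).
by rewrite /= cRD cRM; ring.
Qed.

Lemma psi_eq0_lin_closed (l k : vec R) (m : vec R[i]) b :
  lin_closed (fun T => psi T l k m b = 0).
Proof.
split=> [|s T U PT PU]; last first.
  by move: PT PU; case: b => [|[|[|[|b]]]]; rewrite /= !cten_lin => -> ->; rewrite mulr0 addr0.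
have cten0 (u v w z : vec R[i]) : cten (fun _ _ _ _ => 0) u v w z = 0.
  have cR0 : cR (0 : R) = 0 by apply/eqP; rewrite eq_complex /= !eqxx.
  by rewrite /cten; do 4 (apply: big1 => ? _); rewrite cR0 !mul0r.
by case: b => [|[|[|[|b]]]]; rewrite /= cten0.
Qed.

End LinearConditions.

Section Expansion.
Variable R : realType.

(* Horner scheme: [sum_(a < N.+1) O^(N.+1-a) G_a = O * (G_N + sum_(a < N) O^(N-a) G_a)]. *)
Fixpoint pow_sum_coef (c : nat -> R) (D : nat -> nat -> R) N : nat -> R :=
  if N is N'.+1 then cauchy_prod c (fun i => D N' i + pow_sum_coef c D N' i)
  else fun _ => 0.

Lemma jet_pow_sum (Omega : R -> R) c (G : nat -> R -> R) D n N :
  jet Omega c n -> (forall a, (a < N)%N -> jet (G a) (D a) n) ->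
  jet (fun x => \sum_(a < N) Omega x ^+ (N - a) * G a x) (pow_sum_coef c D N) n.
Proof.
move=> JO; elim: N => [|N IH] JG /=.
  apply: bigO_left_eq_near (bigO_left0 _ n); near=> x.
  by rewrite big_ord0 big1 ?subrr // => i _; rewrite mul0r.
have JN := JG N (ltnSn N); have {}IH := IH (fun a lt_aN => JG a (ltnW lt_aN)).
apply: jet_eq_near (jetM JO (jetD JN IH)); near=> x.
rewrite big_ord_recr /= subSnn expr1 mulrDr addrC mulr_sumr; congr (_ + _).
by apply: eq_bigr => a _; rewrite subSn ?exprS ?mulrA // ltnW.
Unshelve. all: by end_near.
Qed.

Lemma tensor_jet_bound (F : R -> tensor4 R) (T : nat -> tensor4 R) n :
  (forall a b c d, jet (fun x => F x a b c d) (fun i => T i a b c d) n) ->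
  exists K del : R, 0 < del /\ forall x, - del < x < 0 -> forall a b c d,
    `|F x a b c d - \sum_(i < n) T i a b c d * x ^+ i| <= K * `|x| ^+ n.
Proof.
move=> J; pose H (t : 'I_4 * 'I_4 * 'I_4 * 'I_4) x :=
  let: (a, b, c, d) := t in F x a b c d - \sum_(i < n) T i a b c d * x ^+ i.
have [K /near_at_left0P[del del0 HK]] := bigO_left_uniform (H := H) (fun '(a, b, c, d) => J a b c d).
by exists K, del; split => // x hx a b c d; exact: (HK x hx (a, b, c, d)).
Qed.

End Expansion.

Ltac lin_comb LP base :=
  repeat first [ apply: (lin_closedB LP) | apply: (lin_closedD LP)
               | apply: (lin_closedN LP) | apply: (lin_closedZ _ LP) | apply: base ].

Unset Implicit Arguments.

Theorem mainTheorem3 (R : realType)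
  (g : 'M[R]_4) (l k : vec R) (m : vec R[i])
  (Omega : R -> R) (c : nat -> R)
  (LC : R -> tensor4 R) (Cf : nat -> R -> tensor4 R) (Cc : nat -> nat -> tensor4 R) :
  g^T = g -> g \in unitmx -> null_tetrad g l k m ->
  pseries_near Omega c -> c 0%N = 0 -> c 1%N = -1 ->
  (* [Cf a] is C^(a) along gamma and [Cc a i] is C^(a,i) *)
  (forall a : nat, (a < 5)%N -> forall al be ga de : 'I_4,
     pseries_near (fun x => Cf a x al be ga de) (fun i => Cc a i al be ga de)) ->
  (* [LC] is L^* hatC *)
  (forall x : R, -1 <= x < 0 -> forall al be ga de : 'I_4,
     LC x al be ga de = \sum_(a < 5) Omega x ^+ (5 - a) * Cf a x al be ga de) ->
  (forall a : nat, (a < 5)%N -> forall x : R, -1 <= x < 0 ->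
     weyl_candidate g (Cf a x) /\ only_psi a (Cf a x) l k m) ->
  let O := Om c in
  let dN : tensor4 R := fun al be ga de =>
    let C a i := Cc a i al be ga de in
    - C 4%N 0%N in
  let eIII : tensor4 R := fun al be ga de =>
    let C a i := Cc a i al be ga de in
    C 3%N 0%N + O 2%N / 2 * C 4%N 0%N - C 4%N 1%N in
  let fIID : tensor4 R := fun al be ga de =>
    let C a i := Cc a i al be ga de in
    - C 2%N 0%N - O 2%N * C 3%N 0%N + O 3%N / 6 * C 4%N 0%N + C 3%N 1%N
    - C 4%N 2%N + O 2%N / 2 * C 4%N 1%N in
  let gI : tensor4 R := fun al be ga de =>
    let C a i := Cc a i al be ga de in
    C 1%N 0%N + 3 * O 2%N / 2 * C 2%N 0%N
    + (O 2%N ^+ 2 / 4 - O 3%N / 3) * C 3%N 0%N + O 4%N / 24 * C 4%N 0%N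
    - C 2%N 1%N + C 3%N 2%N - C 4%N 3%N + O 2%N / 2 * C 4%N 2%N
    - O 2%N * C 3%N 1%N + O 3%N / 6 * C 4%N 1%N in
  let hI : tensor4 R := fun al be ga de =>
    let C a i := Cc a i al be ga de in
    - C 0%N 0%N - 2 * O 2%N * C 1%N 0%N
    + (O 3%N / 2 - 3 / 4 * O 2%N ^+ 2) * C 2%N 0%N
    + (1 / 6 * O 2%N * O 3%N - O 4%N / 12) * C 3%N 0%N + O 5%N / 120 * C 4%N 0%N
    + C 1%N 1%N - C 2%N 2%N + C 3%N 3%N - C 4%N 4%N
    + 3 / 2 * O 2%N * C 2%N 1%N - O 2%N * C 3%N 2%N + O 2%N / 2 * C 4%N 3%N
    + O 2%N ^+ 2 / 4 * C 3%N 1%N - O 3%N / 3 * C 3%N 1%N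
    + O 3%N / 6 * C 4%N 2%N + O 4%N / 24 * C 4%N 1%N in
  (exists K del : R, 0 < del /\
     forall x : R, - del < x < 0 -> forall al be ga de : 'I_4,
       `| LC x al be ga de
          - (x * dN al be ga de + x ^+ 2 * eIII al be ga de
             + x ^+ 3 * fIID al be ga de + x ^+ 4 * gI al be ga de
             + x ^+ 5 * hI al be ga de) | <= K * `|x| ^+ 6)
  /\ [/\ weyl_candidate g dN, weyl_candidate g eIII, weyl_candidate g fIID,
         weyl_candidate g gI & weyl_candidate g hI]
  (* type N or zero *)
  /\ only_psi 4 dN l k m
  (* type III or more special *)
  /\ (forall b : nat, (b <= 2)%N -> psi eIII l k m b = 0)
  (* l a repeated principal null direction: type II/D or more special *)
  /\ (forall b : nat, (b <= 1)%N -> psi fIID l k m b = 0).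
Proof.
move=> _ _ _ hO c0 c1 hCf hLC hW O dN eIII fIID gI hI.
have jetCf a (ha : (a < 5)%N) al be ga de n := pseries_near_jet n (hCf a ha al be ga de).
have domain : \forall x \near (0 : R)^'-, -1 <= x < 0.
  by apply/near_at_left0P; exists 1 => // x /andP[x1 x0]; rewrite (ltW x1) x0.
have weylC a i (ha : (a < 5)%N) : weyl_candidate g (Cc a i).
  by apply: (weyl_candidate_coef (jetCf a ha)); apply: filterS domain => x /(hW a ha x)[].
have psiC a i b (ha : (a < 5)%N) : (b < 5)%N -> b != a -> psi (Cc a i) l k m b = 0.
  by apply: (only_psi_coef (jetCf a ha)); apply: filterS domain => x /(hW a ha x)[].
pose t i : tensor4 R := match i with
  | 1 => dN | 2 => eIII | 3 => fIID | 4 => gI | 5 => hI | _ => fun _ _ _ _ => 0 end.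
have jetLC al be ga de : jet (fun x => LC x al be ga de) (fun i => t i al be ga de) 6.
  apply: jet_eq_near (eq_jet_coef _ (jet_pow_sum (pseries_near_jet 6 hO)
    (fun a ha => jetCf a ha al be ga de 6))).
    by apply: filterS domain => x dx; rewrite hLC.
  have [hO2 hO3 hO4 hO5] : [/\ O 2%N = 2 * c 2%N, O 3%N = 6 * c 3%N, O 4%N = 24 * c 4%N
    & O 5%N = 120 * c 5%N] by [].
  case=> [|[|[|[|[|[|i]]]]]] // _; rewrite /= ?cauchy_prodS !cauchy_prod0 /= ?c0 ?c1 /t.
  - by ring.
  - by rewrite /dN /=; ring.
  - by rewrite /eIII /= hO2; field.
  - by rewrite /fIID /= hO2 hO3; field.
  - by rewrite /gI /= hO2 hO3 hO4; field.
  - by rewrite /hI /= hO2 hO3 hO4 hO5; field.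
split.
  have [K [del [del0 Hbound]]] := tensor_jet_bound jetLC; exists K, del; split => // x hx al be ga de.
  rewrite [X in `|_ - X|](_ : _ = \sum_(i < 6) t i al be ga de * x ^+ i); first exact: Hbound.
  by rewrite !big_ord_recr big_ord0 /=; ring.
split.
  have LW := weyl_candidate_lin_closed g.
  by rewrite /dN /eIII /fIID /gI /hI /=; split; lin_comb LW weylC.
split.
  by move=> b ltb5 neqb4; apply: (lin_closedN (psi_eq0_lin_closed l k m b)); exact: psiC.
split.
  move=> b leb2; have LP := psi_eq0_lin_closed l k m b; rewrite /eIII /=.
  by lin_comb LP psiC; clear LP; case: b leb2 => [|[|[|b]]].
move=> b leb1; have LP := psi_eq0_lin_closed l k m b; rewrite /fIID /=.
by lin_comb LP psiC; clear LP; case: b leb1 => [|[|b]].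
Qed.
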